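(* Let $\mathcal{H}$ be a finite-dimensional Hilbert space, $\{\rho_\theta;\theta\in\Theta\subset\mathbb{R}^d\}$ a smooth family of density operators, $\theta_0\in\Theta$ with $\rho=\rho_{\theta_0}$ strictly positive, and let $\{D_j^{(S)}\}_{j=1}^r$ be a basis of a $\mathcal{D}_\rho$ invariant extension of the SLD tangent space with $D_i^{(S)}=L_i^{(S)}$ for $1\le i\le d$. Let $\Sigma_{ij}=\operatorname{Tr}\rho D_j^{(S)}D_i^{(S)}$, $R=(\operatorname{Re}\Sigma)^{-1}\Sigma(\operatorname{Re}\Sigma)^{-1}=\begin{pmatrix}R_1&R_2^*\\R_2&R_3\end{pmatrix}$ with $R_1$ of size $d\times d$, $R_2$ of size $(r-d)\times d$, $R_3$ of size $(r-d)\times(r-d)$. For $\beta\in[0,1]$ let $D_i^{(\beta)}=(I+\beta\sqrt{-1}\mathcal{D}_\rho)^{-1}(D_i^{(S)})$ ($1\le i\le r$) and $\tilde J^{(\beta)}_{\theta_0}=[\langle D_i^{(\beta)},D_j^{(\beta)}\rangle^{(\beta)}]_{1\le i,j\le r}$. Then $$(\tilde J^{(\beta)}_{\theta_0})^{-1}=\operatorname{Re}R+\beta\sqrt{-1}\operatorname{Im}R,$$ and $$(J^{(\beta)}_{\theta_0})^{-1}=R_1^{(\beta)}-R_2^{(\beta)*}(R_3^{(\beta)})^{-1}R_2^{(\beta)},$$ where $R_k^{(\beta)}=\operatorname{Re}R_k+\beta\sqrt{-1}\operatorname{Im}R_k$ for $k=1,2,3$.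
   Context: $\partial_i\rho=\frac{\partial}{\partial\theta^i}\rho_\theta|_{\theta=\theta_0}$. SLDs $L_i^{(S)}$: Hermitian with $\partial_i\rho=\frac12(\rho L_i^{(S)}+L_i^{(S)}\rho)$, assumed linearly independent; SLD tangent space $\mathcal{T}=\operatorname{span}_{\mathbb{R}}\{L_i^{(S)}\}$. Commutation operator: $\mathcal{D}_\rho(X)\rho+\rho\mathcal{D}_\rho(X)=\sqrt{-1}(X\rho-\rho X)$; a $\mathcal{D}_\rho$ invariant extension of $\mathcal{T}$ is a real subspace of Hermitian operators containing $\mathcal{T}$ and mapped into itself by $\mathcal{D}_\rho$. Inner product on $\mathcal{B}(\mathcal{H})$: $\langle X,Y\rangle^{(\beta)}=\frac12\operatorname{Tr}X^*\{(1+\beta)\rho Y+(1-\beta)Y\rho\}$. The $\beta$ logarithmic derivatives $L_i^{(\beta)}$ are defined by $\partial_i\rho=\frac{1+\beta}{2}\rho L_i^{(\beta)}+\frac{1-\beta}{2}L_i^{(\beta)}\rho$, and $J^{(\beta)}_{\theta_0}=[\langle L_i^{(\beta)},L_j^{(\beta)}\rangle^{(\beta)}]_{ij}$. Re, Im are entrywise. *)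

From HB Require Import structures.
From mathcomp Require Import all_boot all_order all_algebra.
From mathcomp Require Import all_classical all_reals all_analysis.
From mathcomp Require Import complex.
Set Implicit Arguments. Unset Strict Implicit. Unset Printing Implicit Defensive.
Import Order.TTheory GRing.Theory Num.Theory.
Import numFieldNormedType.Exports.
Local Open Scope ring_scope.
Local Open Scope classical_set_scope.

Section QDefs.
Variable R : realType.
Local Notation C := (R[i]).

Definition toC (x : R) : C := Complex x 0.
Definition reR (z : C) : R := complex.Re z.
Definition imR (z : C) : R := complex.Im z.

Definition adjmx m n (A : 'M[C]_(m, n)) : 'M[C]_(n, m) :=
  (map_mx (fun z : C => z^*) A)^T.

Definition hermitian n (A : 'M[C]_n) : Prop := adjmx A = A.

Definition posdef n (A : 'M[C]_n) : Prop :=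
  hermitian A /\ forall v : 'cV[C]_n, v != 0 -> 0 < (adjmx v *m A *m v) 0 0.

Definition psd n (A : 'M[C]_n) : Prop :=
  hermitian A /\ forall v : 'cV[C]_n, 0 <= (adjmx v *m A *m v) 0 0.

Definition density n (A : 'M[C]_n) : Prop := psd A /\ \tr A = 1.

Definition ReMx m n (A : 'M[C]_(m, n)) : 'M[C]_(m, n) := map_mx (fun z => 'Re z) A.
Definition ImMx m n (A : 'M[C]_(m, n)) : 'M[C]_(m, n) := map_mx (fun z => 'Im z) A.

Definition iterD d (vs : seq 'rV[R]_d) (f : 'rV[R]_d -> R) : 'rV[R]_d -> R :=
  foldr (fun v g => 'D_v g) f vs.

(* f is C^infinity on the open set Th: every iterated directional
   derivative is (Frechet) differentiable at every point of Th *)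
Definition smooth_on d (Th : set 'rV[R]_d) (f : 'rV[R]_d -> R) : Prop :=
  forall (vs : seq 'rV[R]_d) (x : 'rV[R]_d), Th x -> differentiable (iterD vs f) x.

Definition smooth_family d n (Th : set 'rV[R]_d) (rho : 'rV[R]_d -> 'M[C]_n) : Prop :=
  forall a b : 'I_n, smooth_on Th (fun th => reR (rho th a b))
                  /\ smooth_on Th (fun th => imR (rho th a b)).

Definition ecoord d (i : 'I_d) : 'rV[R]_d := delta_mx 0 i.

Definition pderiv d n (rho : 'rV[R]_d -> 'M[C]_n) (th0 : 'rV[R]_d) (i : 'I_d)
  : 'M[C]_n :=
  \matrix_(a, b) (toC ('D_(ecoord i) (fun th => reR (rho th a b)) th0)
                  + 'i * toC ('D_(ecoord i) (fun th => imR (rho th a b)) th0)).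

Definition real_span r n (D : 'I_r -> 'M[C]_n) : set 'M[C]_n :=
  fun X => exists c : 'I_r -> R, X = \sum_(k < r) toC (c k) *: D k.

Definition real_lin_indep r n (D : 'I_r -> 'M[C]_n) : Prop :=
  forall c : 'I_r -> R, \sum_(k < r) toC (c k) *: D k = 0 -> forall k, c k = 0.

Definition real_subspace n (V : set 'M[C]_n) : Prop :=
  V 0 /\ (forall X Y, V X -> V Y -> V (X + Y))
      /\ (forall (c : R) X, V X -> V (toC c *: X)).

Definition is_commutation_op n (rho : 'M[C]_n) (Dc : 'M[C]_n -> 'M[C]_n) : Prop :=
  forall X, Dc X *m rho + rho *m Dc X = 'i *: (X *m rho - rho *m X).

Definition is_SLD n (rho drho L : 'M[C]_n) : Prop :=
  hermitian L /\ drho = 2^-1 *: (rho *m L + L *m rho).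

Definition Dinv_extension d n (Dc : 'M[C]_n -> 'M[C]_n) (L : 'I_d -> 'M[C]_n)
  (V : set 'M[C]_n) : Prop :=
  [/\ real_subspace V, (forall X, V X -> hermitian X),
      real_span L `<=` V & (forall X, V X -> V (Dc X))].

Definition is_betaLD n (beta : R) (rho drho L : 'M[C]_n) : Prop :=
  drho = ((1 + toC beta) / 2) *: (rho *m L) + ((1 - toC beta) / 2) *: (L *m rho).

Definition ipb n (beta : R) (rho X Y : 'M[C]_n) : C :=
  2^-1 * \tr (adjmx X *m ((1 + toC beta) *: (rho *m Y) + (1 - toC beta) *: (Y *m rho))).

Definition betaM m k (beta : R) (A : 'M[C]_(m, k)) : 'M[C]_(m, k) :=
  ReMx A + (toC beta * 'i) *: ImMx A.

End QDefs.

From Pilot Require Import Defs.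
From HB Require Import structures.
From mathcomp Require Import all_boot all_order all_algebra.
From mathcomp Require Import all_classical all_reals all_analysis.
From mathcomp Require Import complex ring.
Set Implicit Arguments.
Unset Strict Implicit.
Unset Printing Implicit Defensive.
Import Order.TTheory GRing.Theory Num.Theory.
Import numFieldNormedType.Exports.
Local Open Scope ring_scope.

(** The map [idDc b = I + b sqrt(-1) D_rho] turns beta inner products into SLD ones,
    <X, Y>^(b) = <X, idDc b Y>^(0), and is self-adjoint for <.,.>^(0).  Write
    D_rho(D_j) = sum_k A_kj D_k, with A real because D_rho preserves the real span
    of the D_j, and let G be the (real, invertible) SLD Gram matrix of the D_j.
    Then Sigma = G + sqrt(-1) G A, so R = G^-1 + sqrt(-1) A G^-1, while
    Jt (I + beta sqrt(-1) A) = G because idDc beta sends D_j^(beta) to D_j^(S).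
    Hence Jt^-1 = (I + beta sqrt(-1) A) G^-1 = Re R + beta sqrt(-1) Im R.
    As idDc beta is injective and sends both L_i^(beta) and D_i^(beta) to L_i^(S),
    J is the upper-left block of Jt, and the second formula is the Schur-complement
    expression of the inverse of that block through the Hermitian matrix Jt^-1. *)

Section ComplexMatrix.
Variable R : realType.
Local Notation C := R[i].

Lemma conj_toC (x : R) : (toC x)^* = toC x.
Proof. exact: conjc_real. Qed.

Lemma toC_Re (z : C) : toC (complex.Re z) = (z + z^*) / 2.
Proof. exact: ReJ_add. Qed.

Lemma toC_Im (z : C) : toC (complex.Im z) = (z^* - z) / 2 * 'i.
Proof. exact: ImJ_sub. Qed.

Lemma adjmxM m n p (A : 'M[C]_(m, n)) (B : 'M[C]_(n, p)) :
  adjmx (A *m B) = adjmx B *m adjmx A.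
Proof. by rewrite /adjmx map_mxM trmx_mul. Qed.

Lemma adjmxD m n (A B : 'M[C]_(m, n)) : adjmx (A + B) = adjmx A + adjmx B.
Proof. by apply/matrixP => i j; rewrite !mxE rmorphD. Qed.

Lemma adjmxZ m n a (A : 'M[C]_(m, n)) : adjmx (a *: A) = a^* *: adjmx A.
Proof. by apply/matrixP => i j; rewrite !mxE rmorphM. Qed.

Lemma adjmx0 m n : adjmx (0 : 'M[C]_(m, n)) = 0.
Proof. by apply/matrixP => i j; rewrite !mxE rmorph0. Qed.

Lemma adjmxK m n (A : 'M[C]_(m, n)) : adjmx (adjmx A) = A.
Proof. by apply/matrixP => i j; rewrite !mxE conjCK. Qed.

Lemma adjmx_sum n k (a : 'I_k -> C) (F : 'I_k -> 'M[C]_n) :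
  adjmx (\sum_i a i *: F i) = \sum_i (a i)^* *: adjmx (F i).
Proof.
elim/big_rec2: _ => [|i A B _ <-]; first exact: adjmx0.
by rewrite adjmxD adjmxZ.
Qed.

Lemma adjmx_invmx n (A : 'M[C]_n) : adjmx (invmx A) = invmx (adjmx A).
Proof. by rewrite /adjmx map_invmx trmx_inv. Qed.

Lemma mxtrace_adjmx n (A : 'M[C]_n) : \tr (adjmx A) = (\tr A)^*.
Proof. by rewrite /mxtrace rmorph_sum; apply: eq_bigr => i _; rewrite !mxE. Qed.

Lemma ursubmx_adjmx p q (M : 'M[C]_(p + q)) :
  adjmx M = M -> ursubmx M = adjmx (dlsubmx M).
Proof. by move=> hM; apply/matrixP => i j; rewrite -{1}hM !mxE. Qed.

End ComplexMatrix.

Section BetaInnerProduct.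
Variables (R : realType) (n : nat) (rho : 'M[R[i]]_n).
Local Notation C := R[i].

Definition gram (b : R) {k} (F : 'I_k -> 'M[C]_n) : 'M[C]_k :=
  \matrix_(i, j) ipb b rho (F i) (F j).

Definition lin_indep {k} (F : 'I_k -> 'M[C]_n) : Prop :=
  forall a : 'I_k -> C, \sum_i a i *: F i = 0 -> forall i, a i = 0.

Lemma ipb0E X Y : ipb 0 rho X Y = 2^-1 * \tr (adjmx X *m (rho *m Y + Y *m rho)).
Proof. by rewrite /ipb (_ : toC 0 = 0) // addr0 subr0 !scale1r. Qed.

Lemma ipbDr b X Y Z : ipb b rho X (Y + Z) = ipb b rho X Y + ipb b rho X Z.
Proof.
rewrite /ipb [rho *m _]mulmxDr [(Y + Z) *m _]mulmxDl !scalerDr addrACA.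
by rewrite mulmxDr mxtraceD mulrDr.
Qed.

Lemma ipbZr b X a Y : ipb b rho X (a *: Y) = a * ipb b rho X Y.
Proof.
rewrite /ipb -scalemxAr -scalemxAl !scalerA (mulrC (1 + _)) (mulrC (1 - _)).
by rewrite -!scalerA -scalerDr -scalemxAr mxtraceZ mulrCA.
Qed.

Lemma ipb0r b X : ipb b rho X 0 = 0.
Proof. by rewrite -(scale0r 0) ipbZr mul0r. Qed.

Lemma ipb_sumr b X k (a : 'I_k -> C) (Y : 'I_k -> 'M[C]_n) :
  ipb b rho X (\sum_i a i *: Y i) = \sum_i a i * ipb b rho X (Y i).
Proof.
elim/big_rec2: _ => [|i y1 y2 _ <-]; first exact: ipb0r.
by rewrite ipbDr ipbZr.
Qed.

Lemma ipb_conj b X Y : Defs.hermitian rho -> (ipb b rho X Y)^* = ipb b rho Y X.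
Proof.
move=> rho_herm; rewrite /ipb rmorphM fmorphV rmorph_nat -[X in _ * X]mxtrace_adjmx.
rewrite !(adjmxM, adjmxD, adjmxZ) adjmxK rho_herm rmorphD rmorphB rmorph1 /= conj_toC.
rewrite mulmxDl mulmxDr -!scalemxAl -!scalemxAr !mxtraceD !mxtraceZ.
by rewrite !mulmxA -(mxtrace_mulC rho) mulmxA.
Qed.

Lemma ipb_suml b k (a : 'I_k -> C) (X : 'I_k -> 'M[C]_n) Y :
  Defs.hermitian rho ->
  ipb b rho (\sum_i a i *: X i) Y = \sum_i (a i)^* * ipb b rho (X i) Y.
Proof.
move=> rho_herm; rewrite -ipb_conj // ipb_sumr rmorph_sum.
by apply: eq_bigr => i _; rewrite rmorphM /= ipb_conj.
Qed.

Lemma ipb0_sym (X Y : 'M[C]_n) : Defs.hermitian X -> Defs.hermitian Y ->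
  ipb 0 rho X Y = ipb 0 rho Y X.
Proof.
move=> X_herm Y_herm; rewrite !ipb0E X_herm Y_herm !mulmxDr !mxtraceD.
have e1 : \tr (Y *m (X *m rho)) = \tr (X *m (rho *m Y)).
  by rewrite mxtrace_mulC -mulmxA.
have e2 : \tr (Y *m (rho *m X)) = \tr (X *m (Y *m rho)).
  by rewrite mulmxA mxtrace_mulC.
by rewrite e1 e2 addrC.
Qed.

Lemma gram_adjmx b k (F : 'I_k -> 'M[C]_n) :
  Defs.hermitian rho -> adjmx (gram b F) = gram b F.
Proof. by move=> rho_herm; apply/matrixP => i j; rewrite !mxE ipb_conj. Qed.

Section PositiveDefinite.
Hypothesis rho_pd : posdef rho.

Lemma mxtrace_adj_rho_sum (Z : 'M[C]_n) :
  \tr (adjmx Z *m (rho *m Z)) = \sum_(j < n) (adjmx (col j Z) *m rho *m col j Z) 0 0.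
Proof.
rewrite mulmxA /mxtrace; apply: eq_bigr => j _.
rewrite !mxE; apply: eq_bigr => k _; rewrite !mxE; congr (_ * _).
by apply: eq_bigr => l _; rewrite !mxE.
Qed.

Lemma mxtrace_adj_rho_ge0 (Z : 'M[C]_n) : 0 <= \tr (adjmx Z *m (rho *m Z)).
Proof.
rewrite mxtrace_adj_rho_sum; apply: sumr_ge0 => j _.
have [->|nz] := eqVneq (col j Z) 0; first by rewrite mulmx0 mxE.
exact/ltW/rho_pd.2.
Qed.

Lemma mxtrace_adj_rho_eq0 (Z : 'M[C]_n) : \tr (adjmx Z *m (rho *m Z)) = 0 -> Z = 0.
Proof.
rewrite mxtrace_adj_rho_sum => /psumr_eq0P Z0; apply/matrixP => a j.
have [/matrixP/(_ a 0)|nz] := eqVneq (col j Z) 0; first by rewrite !mxE.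
have := rho_pd.2 _ nz; rewrite Z0 ?ltxx // => l _.
have [->|nzl] := eqVneq (col l Z) 0; first by rewrite mulmx0 mxE.
exact/ltW/rho_pd.2.
Qed.

Lemma ipb_eq0 b Z : 0 <= b <= 1 -> ipb b rho Z Z = 0 -> Z = 0.
Proof.
move=> /andP[b_ge0 b_le1].
have tr_rhoZ : \tr (adjmx Z *m (Z *m rho)) = \tr (adjmx (adjmx Z) *m (rho *m adjmx Z)).
  by rewrite adjmxK mxtrace_mulC -mulmxA.
have b1_gt0 : 0 < 1 + toC b.
  by rewrite -[1](rmorph1 (real_complex R)) -rmorphD ltcR ltr_wpDr.
have b2_ge0 : 0 <= 1 - toC b.
  by rewrite -[1](rmorph1 (real_complex R)) -rmorphB lecR subr_ge0.
rewrite /ipb mulmxDr -!scalemxAr mxtraceD !mxtraceZ tr_rhoZ.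
move/eqP; rewrite mulf_eq0 invr_eq0 pnatr_eq0 /=.
rewrite paddr_eq0 ?mulr_ge0 ?mxtrace_adj_rho_ge0 ?(ltW b1_gt0) //.
by rewrite mulf_eq0 (gt_eqF b1_gt0) => /andP[/eqP/mxtrace_adj_rho_eq0].
Qed.

Lemma anticomm_inj (X Y : 'M[C]_n) : rho *m X + X *m rho = rho *m Y + Y *m rho -> X = Y.
Proof.
move=> XY; apply/eqP; rewrite -subr_eq0; apply/eqP.
apply: (@ipb_eq0 0); first by rewrite lexx ler01.
by rewrite ipb0E mulmxBr mulmxBl addrACA -opprD XY subrr mulmx0 mxtrace0 mulr0.
Qed.

Lemma gram_unitmx b k (F : 'I_k -> 'M[C]_n) :
  0 <= b <= 1 -> lin_indep F -> gram b F \in unitmx.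
Proof.
move=> hb F_li; rewrite unitmxE unitfE; apply/negP => /det0P [v v_neq0 vF].
pose Y := \sum_i (v 0 i)^* *: F i.
have Y0 : Y = 0.
  apply: (@ipb_eq0 b) => //; rewrite {2}/Y ipb_sumr big1 // => j _.
  move/matrixP: vF => /(_ 0 j); rewrite !mxE => vFj.
  suff -> : ipb b rho Y (F j) = 0 by rewrite mulr0.
  rewrite /Y ipb_suml; last exact: rho_pd.1.
  rewrite -[X in _ = X]vFj.
  by apply: eq_bigr => i _; rewrite conjCK mxE.
case/eqP: v_neq0; apply/matrixP => i j; rewrite (ord1 i) mxE.
by apply/eqP; rewrite -conjC_eq0; apply/eqP/(F_li _ Y0).
Qed.

End PositiveDefinite.

Lemma hermitian_lin_indep k (F : 'I_k -> 'M[C]_n) :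
  (forall i, Defs.hermitian (F i)) -> real_lin_indep F -> lin_indep F.
Proof.
move=> F_herm F_li a Fa0.
have Fca0 : \sum_i (a i)^* *: F i = 0.
  rewrite (_ : \sum_i _ = adjmx (\sum_i a i *: F i)); first by rewrite Fa0 adjmx0.
  by rewrite adjmx_sum; apply: eq_bigr => i _; rewrite F_herm.
have Re0 : forall i, complex.Re (a i) = 0.
  apply: F_li; rewrite (_ : \sum_i _ = 2^-1 *: (\sum_i a i *: F i + \sum_i (a i)^* *: F i)).
    by rewrite Fa0 Fca0 addr0 scaler0.
  rewrite -big_split scaler_sumr; apply: eq_bigr => i _ /=.
  by rewrite -scalerDl scalerA mulrC toC_Re.
have Im0 : forall i, complex.Im (a i) = 0.
  apply: F_li; rewrite (_ : \sum_i _ = (2^-1 * 'i) *: (\sum_i (a i)^* *: F i - \sum_i a i *: F i)).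
    by rewrite Fa0 Fca0 subrr scaler0.
  rewrite -sumrB scaler_sumr; apply: eq_bigr => i _ /=.
  by rewrite toC_Im -scalerBl scalerA; congr (_ *: _); ring.
by move=> i; move: (Re0 i) (Im0 i); case: (a i) => x y /= -> ->.
Qed.

End BetaInnerProduct.

Section CommutationOperator.
Variables (R : realType) (n : nat) (rho : 'M[R[i]]_n).
Variable Dc : 'M[R[i]]_n -> 'M[R[i]]_n.
Local Notation C := R[i].
Hypothesis Dc_comm : is_commutation_op rho Dc.

Definition idDc (b : R) (X : 'M[C]_n) : 'M[C]_n := X + (toC b * 'i) *: Dc X.

Lemma beta_sum_idDc b (Y : 'M[C]_n) :
  (1 + toC b) *: (rho *m Y) + (1 - toC b) *: (Y *m rho) =
  rho *m idDc b Y + idDc b Y *m rho.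
Proof.
move: (Dc_comm Y); rewrite /idDc mulmxDr mulmxDl -scalemxAr -scalemxAl.
move: (rho *m Y) (Y *m rho) (Dc Y *m rho) (rho *m Dc Y) => P Q U V /matrixP UV.
apply/matrixP => a e; move: (UV a e); rewrite !mxE => UVae.
transitivity (P a e + Q a e + toC b * 'i * (U a e + V a e)); last by ring.
rewrite UVae.
transitivity (P a e + Q a e + toC b * ('i * 'i) * (Q a e - P a e)); last by ring.
by rewrite mulCii; ring.
Qed.

Lemma ipb_idDc b X Y : ipb b rho X Y = ipb 0 rho X (idDc b Y).
Proof. by rewrite ipb0E /ipb beta_sum_idDc. Qed.

Lemma ipb0_idDc b X Y : Defs.hermitian rho ->
  ipb 0 rho (idDc b X) Y = ipb 0 rho X (idDc b Y).
Proof.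
move=> rho_herm; rewrite -(@ipb_conj _ _ rho 0 Y) // -ipb_idDc.
by rewrite (@ipb_conj _ _ rho b Y X rho_herm) ipb_idDc.
Qed.

Lemma mxtrace_rho_herm (X Y : 'M[C]_n) : Defs.hermitian X ->
  \tr (rho *m Y *m X) = ipb 0 rho X Y + 'i * ipb 0 rho X (Dc Y).
Proof.
move=> X_herm; rewrite !ipb0E X_herm (addrC (rho *m Dc Y)) Dc_comm -scalemxAr.
rewrite mxtraceZ mulmxBr mulmxDr raddfB mxtraceD /= mxtrace_mulC.
move: (\tr (X *m (rho *m Y))) (\tr (X *m (Y *m rho))) => t1 t2.
transitivity (2^-1 * (t1 + t2) + 2^-1 * ('i * 'i) * (t2 - t1)); last by ring.
by rewrite mulCii; field.
Qed.

Section PositiveDefinite.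
Hypothesis rho_pd : posdef rho.

Lemma Dc_unique W X : W *m rho + rho *m W = 'i *: (X *m rho - rho *m X) -> W = Dc X.
Proof.
by move=> hW; apply: (anticomm_inj rho_pd); rewrite addrC hW -Dc_comm addrC.
Qed.

Lemma Dc0 : Dc 0 = 0.
Proof. by symmetry; apply: Dc_unique; rewrite mul0mx mulmx0 subrr scaler0 addr0. Qed.

Lemma DcP a X Y : Dc (a *: X + Y) = a *: Dc X + Dc Y.
Proof.
symmetry; apply: Dc_unique.
move: (Dc_comm X) (Dc_comm Y); rewrite !mulmxDl !mulmxDr -!scalemxAl -!scalemxAr.
move: (Dc X *m rho) (rho *m Dc X) (Dc Y *m rho) (rho *m Dc Y)
  (X *m rho) (rho *m X) (Y *m rho) (rho *m Y) => A1 A2 A3 A4 B1 B2 B3 B4.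
move=> /matrixP hX /matrixP hY; apply/matrixP => i j.
move: (hX i j) (hY i j); rewrite !mxE => hXij hYij.
transitivity (a * (A1 i j + A2 i j) + (A3 i j + A4 i j)); first by ring.
by rewrite hXij hYij; ring.
Qed.

Lemma DcB X Y : Dc (X - Y) = Dc X - Dc Y.
Proof. by rewrite addrC -scaleN1r DcP scaleN1r addrC. Qed.

Lemma Dc_sum k (a : 'I_k -> C) (X : 'I_k -> 'M[C]_n) :
  Dc (\sum_i a i *: X i) = \sum_i a i *: Dc (X i).
Proof.
elim/big_rec2: _ => [|i y1 y2 _ <-]; first exact: Dc0.
exact: DcP.
Qed.

Lemma idDcB b X Y : idDc b (X - Y) = idDc b X - idDc b Y.
Proof. by rewrite /idDc DcB scalerBr addrACA -opprD. Qed.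

Lemma idDc_sum b k (a : 'I_k -> C) (X : 'I_k -> 'M[C]_n) :
  idDc b (\sum_i a i *: X i) = \sum_i a i *: idDc b (X i).
Proof.
rewrite /idDc Dc_sum scaler_sumr -big_split; apply: eq_bigr => i _ /=.
by rewrite scalerDr !scalerA mulrC.
Qed.

Lemma idDc_inj b X Y : 0 <= b <= 1 -> idDc b X = idDc b Y -> X = Y.
Proof.
move=> hb XY; apply/eqP; rewrite -subr_eq0; apply/eqP; apply: (ipb_eq0 rho_pd hb).
by rewrite ipb_idDc idDcB XY subrr ipb0r.
Qed.

Lemma lin_indep_idDc b k (F G : 'I_k -> 'M[C]_n) :
  (forall i, idDc b (F i) = G i) -> lin_indep G -> lin_indep F.
Proof.
move=> FG G_li a Fa0; apply: G_li.
have -> : \sum_i a i *: G i = idDc b (\sum_i a i *: F i).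
  by rewrite idDc_sum; apply: eq_bigr => i _; rewrite FG.
by rewrite Fa0 /idDc Dc0 scaler0 addr0.
Qed.

Lemma betaLD_idDc b drho L LS :
  is_betaLD b rho drho L -> is_SLD rho drho LS -> idDc b L = LS.
Proof.
move=> betaLD [_ SLD]; apply: (anticomm_inj rho_pd).
apply: (@scalerI _ _ (2^-1 : C)); first by rewrite invr_eq0 pnatr_eq0.
rewrite -beta_sum_idDc -SLD betaLD scalerDr !scalerA.
by rewrite (mulrC 2^-1) (mulrC 2^-1).
Qed.

End PositiveDefinite.

End CommutationOperator.

Section RealEntries.
Variable R : realType.
Local Notation C := R[i].
Local Notation realmx := (map_mx (real_complex R)).

Lemma toC_real (x : R) : toC x \is Num.real.
Proof. by rewrite CrealE conj_toC. Qed.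

Lemma realmx_Re m k (A : 'M[C]_(m, k)) :
  (forall i j, A i j \is Num.real) -> realmx (map_mx (@complex.Re R) A) = A.
Proof.
move=> A_real; apply/matrixP => i j; rewrite !mxE.
by rewrite [real_complex R _]toC_Re (conj_Creal (A_real i j)); field.
Qed.

Lemma ReMx_rect m k (P Q : 'M[R]_(m, k)) : ReMx (realmx P + 'i *: realmx Q) = realmx P.
Proof. by apply/matrixP => i j; rewrite !mxE Re_rect //; apply: toC_real. Qed.

Lemma betaM_rect m k b (P Q : 'M[R]_(m, k)) :
  betaM b (realmx P + 'i *: realmx Q) = realmx P + (toC b * 'i) *: realmx Q.
Proof.
apply/matrixP => i j; rewrite !mxE.
by rewrite Re_rect ?Im_rect //; apply: toC_real.
Qed.

Lemma betaM_ulsubmx p q b (A : 'M[C]_(p + q)) : betaM b (ulsubmx A) = ulsubmx (betaM b A).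
Proof. by apply/matrixP => i j; rewrite !mxE. Qed.

Lemma betaM_dlsubmx p q b (A : 'M[C]_(p + q)) : betaM b (dlsubmx A) = dlsubmx (betaM b A).
Proof. by apply/matrixP => i j; rewrite !mxE. Qed.

Lemma betaM_drsubmx p q b (A : 'M[C]_(p + q)) : betaM b (drsubmx A) = drsubmx (betaM b A).
Proof. by apply/matrixP => i j; rewrite !mxE. Qed.

Lemma real_span_self n r (F : 'I_r -> 'M[C]_n) j : real_span F (F j).
Proof.
exists (fun k => (k == j)%:R); rewrite (bigD1 j) //= eqxx big1 ?addr0.
  by rewrite scale1r.
by move=> k /negbTE ->; rewrite scale0r.
Qed.

Lemma real_span_coefmx n r (F X : 'I_r -> 'M[C]_n) :
  (forall j, real_span F (X j)) ->
  exists M : 'M[R]_r, forall j, X j = \sum_k toC (M k j) *: F k.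
Proof.
move=> /choice[c Xc]; exists (\matrix_(k, j) c j k) => j.
by rewrite Xc; apply: eq_bigr => k _; rewrite mxE.
Qed.

End RealEntries.

Section SchurComplement.
Variable F : comUnitRingType.

Lemma invmx_eq n (A B : 'M[F]_n) : A *m B = 1%:M -> invmx A = B.
Proof.
move=> AB; have [A_unit _] := mulmx1_unit AB.
by rewrite -(mulKmx A_unit B) AB mulmx1.
Qed.

Lemma invmx_ulsubmx p q (T : 'M[F]_(p + q)) :
  T \in unitmx -> ulsubmx T \in unitmx ->
  invmx (ulsubmx T) = ulsubmx (invmx T) -
    ursubmx (invmx T) *m invmx (drsubmx (invmx T)) *m dlsubmx (invmx T).
Proof.
move=> T_unit T1_unit; set M := invmx T.
set T1 := ulsubmx T; set T2 := ursubmx T; set T3 := dlsubmx T; set T4 := drsubmx T.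
set M1 := ulsubmx M; set M2 := ursubmx M; set M3 := dlsubmx M; set M4 := drsubmx M.
have TM : block_mx T1 T2 T3 T4 *m block_mx M1 M2 M3 M4 = block_mx 1%:M 0 0 1%:M.
  by rewrite !submxK mulmxV // -scalar_mx_block.
have MT : block_mx M1 M2 M3 M4 *m block_mx T1 T2 T3 T4 = block_mx 1%:M 0 0 1%:M.
  by rewrite !submxK mulVmx // -scalar_mx_block.
move: TM MT; rewrite !mulmx_block => /eq_block_mx[TM1 TM2 _ _] /eq_block_mx[_ _ MT3 MT4].
have M4T3 : M4 *m T3 = - (M3 *m T1) by apply/eqP; rewrite -addr_eq0 addrC MT3.
have T1M2 : T1 *m M2 = - (T2 *m M4) by apply/eqP; rewrite -addr_eq0 TM2.
have M4_unit : M4 \in unitmx.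
  suff /mulmx1_unit[] : M4 *m (T4 - T3 *m invmx T1 *m T2) = 1%:M by [].
  by rewrite mulmxBr !mulmxA M4T3 !mulNmx mulmxK // opprK addrC.
apply: invmx_eq.
by rewrite mulmxBr !mulmxA T1M2 !mulNmx mulmxK // opprK.
Qed.

End SchurComplement.

Section InvariantExtension.
Variables (R : realType) (n r : nat) (rho : 'M[R[i]]_n).
Variables (Dc : 'M[R[i]]_n -> 'M[R[i]]_n) (DS Db : 'I_r -> 'M[R[i]]_n).
Variables (Ar : 'M[R]_r) (b : R).
Local Notation C := R[i].
Local Notation realmx := (map_mx (real_complex R)).
Hypotheses (rho_pd : posdef rho) (Dc_comm : is_commutation_op rho Dc).
Hypotheses (DS_herm : forall j, Defs.hermitian (DS j)) (DS_li : real_lin_indep DS).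
Hypothesis Dc_DS : forall j, Dc (DS j) = \sum_k toC (Ar k j) *: DS k.
Hypothesis Db_DS : forall j, idDc Dc b (Db j) = DS j.

Local Notation G := (gram rho 0 DS).
Local Notation Gr := (map_mx (@complex.Re R) G).
Local Notation Sigma := (\matrix_(i, j) \tr (rho *m DS j *m DS i) : 'M[C]_r).

Lemma realmx_gram : realmx Gr = G.
Proof.
apply: realmx_Re => i j; rewrite CrealE mxE ipb_conj; last exact: rho_pd.1.
by rewrite ipb0_sym.
Qed.

Lemma gram_DS_unitmx : G \in unitmx.
Proof.
apply: (gram_unitmx rho_pd _ (hermitian_lin_indep DS_herm DS_li)).
by rewrite lexx ler01.
Qed.

Lemma Sigma_rect : Sigma = realmx Gr + 'i *: realmx (Gr *m Ar).
Proof.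
rewrite map_mxM realmx_gram; apply/matrixP => i j.
rewrite !mxE (mxtrace_rho_herm Dc_comm _ (DS_herm i)) Dc_DS ipb_sumr.
by congr (_ + 'i * _); apply: eq_bigr => k _; rewrite !mxE mulrC.
Qed.

Lemma betaM_Rm :
  betaM b (invmx (ReMx Sigma) *m Sigma *m invmx (ReMx Sigma)) =
  (1%:M + (toC b * 'i) *: realmx Ar) *m invmx G.
Proof.
have Gr_unit : Gr \in unitmx.
  by rewrite -(map_unitmx (real_complex R)) realmx_gram gram_DS_unitmx.
rewrite Sigma_rect ReMx_rect -map_invmx mulmxDr mulmxDl -scalemxAr -scalemxAl.
rewrite -!map_mxM mulVmx // mul1mx !mulmxA mulVmx // mul1mx betaM_rect.
by rewrite map_mxM map_invmx realmx_gram mulmxDl mul1mx scalemxAl.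
Qed.

Lemma gram_Db_mul : gram rho b Db *m (1%:M + (toC b * 'i) *: realmx Ar) = G.
Proof.
apply/matrixP => i l.
have -> : G i l = ipb 0 rho (Db i) (idDc Dc b (DS l)).
  by rewrite -ipb0_idDc ?Db_DS ?mxE //; exact: rho_pd.1.
rewrite mulmxDr mulmx1 -scalemxAr !mxE ipbDr ipbZr Dc_DS ipb_sumr.
rewrite (ipb_idDc Dc_comm b) Db_DS.
congr (_ + _ * _); apply: eq_bigr => j _.
by rewrite !mxE (ipb_idDc Dc_comm b) Db_DS mulrC.
Qed.

Lemma gram_Db_mulV :
  gram rho b Db *m ((1%:M + (toC b * 'i) *: realmx Ar) *m invmx G) = 1%:M.
Proof. by rewrite mulmxA gram_Db_mul mulmxV // gram_DS_unitmx. Qed.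

Lemma gram_Db_unitmx : gram rho b Db \in unitmx.
Proof. exact: (mulmx1_unit gram_Db_mulV).1. Qed.

Lemma invmx_gram_Db :
  invmx (gram rho b Db) = betaM b (invmx (ReMx Sigma) *m Sigma *m invmx (ReMx Sigma)).
Proof. by rewrite betaM_Rm; apply: invmx_eq gram_Db_mulV. Qed.

End InvariantExtension.

Local Open Scope classical_set_scope.

Theorem lemma4 (R : realType) (n d m : nat)
  (Th : set 'rV[R]_d) (rho : 'rV[R]_d -> 'M[R[i]]_n) (th0 : 'rV[R]_d)
  (LS : 'I_d -> 'M[R[i]]_n) (Dc : 'M[R[i]]_n -> 'M[R[i]]_n)
  (DS : 'I_(d + m) -> 'M[R[i]]_n) (beta : R)
  (Db : 'I_(d + m) -> 'M[R[i]]_n) (Lb : 'I_d -> 'M[R[i]]_n) :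
  open Th -> Th th0 ->
  (forall th, Th th -> density (rho th)) ->
  smooth_family Th rho ->
  posdef (rho th0) ->
  (forall i, is_SLD (rho th0) (pderiv rho th0 i) (LS i)) ->
  real_lin_indep LS ->
  is_commutation_op (rho th0) Dc ->
  Dinv_extension Dc LS (real_span DS) ->
  real_lin_indep DS ->
  (forall i : 'I_d, DS (lshift m i) = LS i) ->
  0 <= beta <= 1 ->
  (forall j, Db j + (toC beta * 'i) *: Dc (Db j) = DS j) ->
  (forall i, is_betaLD beta (rho th0) (pderiv rho th0 i) (Lb i)) ->
  let Sigma : 'M[R[i]]_(d + m) := \matrix_(i, j) \tr (rho th0 *m DS j *m DS i) in
  let Rm := invmx (ReMx Sigma) *m Sigma *m invmx (ReMx Sigma) in
  let Jt : 'M[R[i]]_(d + m) := \matrix_(i, j) ipb beta (rho th0) (Db i) (Db j) in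
  let J : 'M[R[i]]_d := \matrix_(i, j) ipb beta (rho th0) (Lb i) (Lb j) in
  let R1b := betaM beta (ulsubmx Rm) in
  let R2b := betaM beta (dlsubmx Rm) in
  let R3b := betaM beta (drsubmx Rm) in
  invmx Jt = betaM beta Rm /\
  invmx J = R1b - adjmx R2b *m invmx R3b *m R2b.
Proof.
move=> _ _ _ _ rho_pd SLD LS_li Dc_comm [_ span_herm _ Dc_stable] DS_li DS_LS b_01
  Db_DS Lb_betaLD Sigma Rm Jt J R1b R2b R3b.
have DS_herm j : Defs.hermitian (DS j) := span_herm _ (real_span_self DS j).
have Db_idDc j : idDc Dc beta (Db j) = DS j := Db_DS j.
have [Ar Dc_DS] := real_span_coefmx (fun j => Dc_stable _ (real_span_self DS j)).
have invJt : invmx Jt = betaM beta Rm.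
  exact: invmx_gram_Db rho_pd Dc_comm DS_herm DS_li Dc_DS Db_idDc.
have Jt_unit : Jt \in unitmx.
  exact: gram_Db_unitmx rho_pd Dc_comm DS_herm DS_li Dc_DS Db_idDc.
have Lb_idDc i : idDc Dc beta (Lb i) = LS i.
  by apply: (betaLD_idDc Dc_comm rho_pd (Lb_betaLD i)); apply: SLD.
have Lb_Db i : Lb i = Db (lshift m i).
  by apply: (idDc_inj Dc_comm rho_pd b_01); rewrite Lb_idDc Db_idDc DS_LS.
have J_ul : J = ulsubmx Jt by apply/matrixP => i j; rewrite !mxE !Lb_Db.
have J_unit : J \in unitmx.
  apply: (gram_unitmx rho_pd b_01); apply: (lin_indep_idDc Dc_comm rho_pd Lb_idDc).
  exact: hermitian_lin_indep (fun i => (SLD i).1) LS_li.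
have invJt_herm : adjmx (invmx Jt) = invmx Jt.
  by rewrite adjmx_invmx gram_adjmx //; exact: rho_pd.1.
split; first exact: invJt.
rewrite /R1b /R2b /R3b betaM_ulsubmx betaM_dlsubmx betaM_drsubmx -invJt.
clearbody Jt J; subst J.
by have := invmx_ulsubmx Jt_unit J_unit; rewrite (ursubmx_adjmx invJt_herm).
Qed.
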